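(* Let $P_0,P_1$ be the bivectors on the region of $\mathbb{R}^{2n}$ (coordinates $(q,p)$, $q_i$ pairwise distinct) $$P_0=\sum_{i,j=1}^np_ie^{-|q_i-q_j|}\partial_{p_i}\wedge\partial_{q_j}-\sum_{i<j}\mathrm{sign}(q_i-q_j)p_ip_je^{-|q_i-q_j|}\partial_{p_i}\wedge\partial_{p_j}+\sum_{i<j}\mathrm{sign}(q_i-q_j)(e^{-|q_i-q_j|}-1)\partial_{q_i}\wedge\partial_{q_j},\quad P_1=\sum_{i=1}^n\partial_{p_i}\wedge\partial_{q_i},$$ viewed as maps from 1-forms to vector fields, and let $S=P_1^{-1}\circ P_0$ be the recursion operator on 1-forms. Let $H_0=\sum_ip_i$, $H_1=\frac12\sum_{i,j}p_ip_je^{-|q_i-q_j|}$, and define $H_{i+1}$ for $i\ge1$ by $dH_{i+1}=S^i(dH_1)$. Then each $H_i$ is a polynomial function of $p$ of degree $i+1$.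
   Context: For a bivector $P=\sum P^{ij}\partial_{x_i}\wedge\partial_{x_j}$, the associated map sends a 1-form $\alpha$ to $P(\alpha,\cdot)$. The pair $(P_0,P_1)$ is a bi-Hamiltonian structure with $P_0(dH_0,\cdot)=P_1(dH_1,\cdot)$, so the 1-forms $S^i(dH_1)$ are closed and the $H_i$ are first integrals (defined up to additive constants). *)

From HB Require Import structures.
From mathcomp Require Import all_boot all_order all_algebra.
From mathcomp Require Import all_classical all_reals all_analysis.
Set Implicit Arguments. Unset Strict Implicit. Unset Printing Implicit Defensive.
Import Order.TTheory GRing.Theory Num.Theory.
Local Open Scope ring_scope.
Local Open Scope classical_set_scope.

Section Peakon.
Variable R : realType.
Variable n : nat.

(* A point of R^{2n} is a column vector; the first n coordinates are q, the last n are p. *)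
Definition qc (x : 'cV[R]_(n + n)) (i : 'I_n) : R := x (lshift n i) 0.
Definition pc (x : 'cV[R]_(n + n)) (i : 'I_n) : R := x (rshift n i) 0.

Definition region : set 'cV[R]_(n + n) :=
  [set x | forall i j : 'I_n, i != j -> qc x i != qc x j].

(* Coefficient matrix P^{ab} of a bivector  P = sum_{a,b} P^{ab} d_a /\ d_b
   (indices a : q-coordinates via inl, p-coordinates via inr). *)
Definition P0 (x : 'cV[R]_(n + n)) : 'M[R]_(n + n) :=
  \matrix_(a < n + n, b < n + n)
    match fintype.split a, fintype.split b with
    | inr i, inl j => pc x i * expR (- `|qc x i - qc x j|)
    | inr i, inr j => if (i < j)%N then
                        - (Num.sg (qc x i - qc x j) * pc x i * pc x j
                             * expR (- `|qc x i - qc x j|))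
                      else 0
    | inl i, inl j => if (i < j)%N then
                        Num.sg (qc x i - qc x j) * (expR (- `|qc x i - qc x j|) - 1)
                      else 0
    | inl _, inr _ => 0
    end.

Definition P1 : 'M[R]_(n + n) :=
  \matrix_(a < n + n, b < n + n)
    match fintype.split a, fintype.split b with
    | inr i, inl j => if i == j then 1 else 0
    | _, _ => 0
    end.

(* Matrix of the map  alpha |-> P(alpha, .) :  P(alpha,.)_b = sum_a (P^{ab} - P^{ba}) alpha_a,
   using (d_a /\ d_b)(alpha, beta) = alpha_a beta_b - alpha_b beta_a. *)
Definition sharp (P : 'M[R]_(n + n)) : 'M[R]_(n + n) :=
  \matrix_(b < n + n, a < n + n) (P a b - P b a).

Definition recS (x : 'cV[R]_(n + n)) (al : 'cV[R]_(n + n)) : 'cV[R]_(n + n) :=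
  invmx (sharp P1) *m (sharp (P0 x) *m al).

Definition H0 (x : 'cV[R]_(n + n)) : R := \sum_i pc x i.
Definition H1 (x : 'cV[R]_(n + n)) : R :=
  2^-1 * \sum_i \sum_j pc x i * pc x j * expR (- `|qc x i - qc x j|).

Definition ecoord (a : 'I_(n + n)) : 'cV[R]_(n + n) := delta_mx a 0.

Definition dform (H : 'cV[R]_(n + n) -> R) (x : 'cV[R]_(n + n)) : 'cV[R]_(n + n) :=
  \col_a derive1 (fun t : R => H (x + t *: ecoord a)) 0.

Definition is_Ham (i : nat) (H : 'cV[R]_(n + n) -> R) : Prop :=
  match i with
  | 0 => H = H0
  | 1 => H = H1
  | k.+2 => forall x, region x -> forall a : 'I_(n + n),
      is_derive (0 : R) (1 : R) (fun t : R => H (x + t *: ecoord a))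
                ((iter k.+1 (recS x) (dform H1 x)) a 0)
  end.

Definition poly_in_p_deg (d : nat) (H : 'cV[R]_(n + n) -> R) : Prop :=
  exists c : {ffun 'I_n -> 'I_d.+1} -> ('I_n -> R) -> R,
    (forall x, region x ->
       H x = \sum_(al : {ffun 'I_n -> 'I_d.+1} | (\sum_i (al i : nat) <= d)%N)
               c al (qc x) * \prod_i pc x i ^+ al i)
    /\ exists al : {ffun 'I_n -> 'I_d.+1},
         (\sum_i (al i : nat))%N = d /\ exists x, region x /\ c al (qc x) != 0.

End Peakon.

(* Inverting P1 swaps the q- and p-components of a 1-form (up to sign), and
   the entries of P0 have p-degree 2, 1 and 0 on (p,p), (p,q) and (q,q) index
   pairs.  Hence, by induction on k, the q-components of S^k(dH1) are
   polynomials in p of degree k + 2 and its p-components have degree k + 1,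
   with coefficients depending on q.  Integrating the p-components one
   coordinate at a time shows that H_(k+2) is a polynomial in p of degree at
   most k + 3.  On the axis p = s e_a the q-components of S^k(dH1) vanish and
   its p_a-component is s^(k+1), so H_i(q, s e_a) = c(q) + s^(i+1)/(i+1): the
   coefficient of p_a^(i+1) is not zero and the degree is exact. *)

From HB Require Import structures.
From mathcomp Require Import all_boot all_order all_algebra.
From mathcomp Require Import all_classical all_reals all_analysis.
From mathcomp Require Import zify ring.
Import Order.TTheory GRing.Theory Num.Theory.
Set Implicit Arguments. Unset Strict Implicit. Unset Printing Implicit Defensive.
Local Open Scope ring_scope.

Section RealDerivatives.
Variable R : realType.

Lemma is_derive_ext (f g : R -> R) (x df : R) :
  is_derive x 1 f df -> f =1 g -> is_derive x 1 g df.
Proof. by move=> h /funext <-. Qed.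

Lemma is_derive_translate (f : R -> R) (x df : R) :
  is_derive (0 : R) 1 (fun t => f (x + t)) df -> is_derive x 1 f df.
Proof.
move=> h; have h' : is_derive (shift (- x) x) 1 (fun t => f (x + t)) df.
  by rewrite /= addrN.
have := is_derive1_comp h' (is_derive_shift x 1 (- x)); rewrite mulr1 => hc.
by apply: is_derive_ext hc _ => y /=; rewrite addrC subrK.
Qed.

Lemma is_derive_sum_seq (T : Type) (s : seq T) (f : T -> R -> R) (df : T -> R) (x : R) :
  (forall t, is_derive x 1 (f t) (df t)) ->
  is_derive x 1 (fun y => \sum_(t <- s) f t y) (\sum_(t <- s) df t).
Proof.
move=> h; elim: s => [|t s IH].
  by rewrite big_nil; apply: is_derive_ext (is_derive_cst 0 x 1) _ => y; rewrite big_nil.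
by rewrite big_cons; apply: is_derive_ext (is_deriveD (h t) IH) _ => y; rewrite big_cons.
Qed.

Lemma is_derive_eq_sub_cst (f g dh : R -> R) :
  (forall x : R, is_derive x 1 f (dh x)) -> (forall x : R, is_derive x 1 g (dh x)) ->
  forall x y, f x - g x = f y - g y.
Proof.
move=> hf hg x y; apply: (is_derive_0_is_cst (f := f - g)) => z.
exact: is_derive_eq (is_deriveB (hf z) (hg z)) (subrr _).
Qed.

Lemma is_derive_affine (a b x : R) : is_derive x 1 (fun t => a + t * b) b.
Proof.
have := is_deriveD (is_derive_cst a x 1) (is_deriveZ b (is_derive_id x 1)).
by rewrite add0r /GRing.scale /= mulr1 => h; apply: is_derive_ext h _ => t /=; rewrite mulrC.
Qed.

Lemma derivable_norm_affine (a b : R) : a != 0 -> derivable (fun t : R => `|a + t * b|) 0 1.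
Proof.
move=> a0; have [da _] := is_derive_affine a b 0.
have [dNa _] := is_deriveN (is_derive_affine a b 0).
have -> : (fun t : R => `|a + t * b|) = (fun t => a + t * b) \max (fun t => - (a + t * b)).
  by apply/funext => t /=; rewrite maxrN.
apply: derivable_max => //.
- by rewrite mul0r addr0 -subr_eq0 opprK -mulr2n mulrn_eq0 negb_or a0.
- exact/differentiable_continuous/derivable1_diffP.
- exact/differentiable_continuous/derivable1_diffP.
Qed.

Lemma is_derive_quadform n (u : 'I_n -> R -> R) (w : 'I_n -> 'I_n -> R -> R)
    (du : 'I_n -> R) (dw : 'I_n -> 'I_n -> R) :
  (forall i, is_derive (0 : R) 1 (u i) (du i)) ->
  (forall i j, is_derive (0 : R) 1 (w i j) (dw i j)) ->
  is_derive (0 : R) 1 (fun t => 2^-1 * \sum_i \sum_j u i t * u j t * w i j t)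
    (2^-1 * \sum_i \sum_j (u i 0 * u j 0 * dw i j + w i j 0 * (u i 0 * du j + u j 0 * du i))).
Proof.
move=> hu hw.
have hij i j : is_derive (0 : R) 1 (fun t => u i t * u j t * w i j t)
    (u i 0 * u j 0 * dw i j + w i j 0 * (u i 0 * du j + u j 0 * du i)).
  apply: is_derive_eq (is_deriveM (is_deriveM (hu i) (hu j)) (hw i j)) _.
  have -> : (u i * u j) 0 = u i 0 * u j 0 by [].
  by rewrite /GRing.scale /=; ring.
have h := is_deriveZ 2^-1 (is_derive_sum (fun i => is_derive_sum (hij i))).
apply: is_derive_ext h _ => t; rewrite /GRing.scale /= fct_sumE.
by congr (_ * _); apply: eq_bigr => i _; rewrite fct_sumE.
Qed.

End RealDerivatives.

Section PolynomialsInP.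
Variables (R : realType) (n : nat).
Local Notation vec := ('I_n -> R).
Local Notation term := ((vec -> R) * {ffun 'I_n -> nat})%type.

Definition distinct (q : vec) := forall i j, i != j -> q i != q j.

Definition monomial (m : {ffun 'I_n -> nat}) (p : vec) : R := \prod_i p i ^+ m i.

Definition mdeg (m : {ffun 'I_n -> nat}) : nat := (\sum_i m i)%N.

Definition ppoly (D : nat) (f : vec -> vec -> R) :=
  exists L : seq term, all (fun t => mdeg t.2 <= D)%N L /\
    forall q p, distinct q -> f q p = \sum_(t <- L) t.1 q * monomial t.2 p.

Lemma ppoly_ext D f g :
  ppoly D f -> (forall q p, distinct q -> f q p = g q p) -> ppoly D g.
Proof. by move=> [L [hL hf]] fg; exists L; split=> // q p hq; rewrite -fg // hf. Qed.

Lemma ppoly_leq D D' f : (D <= D')%N -> ppoly D f -> ppoly D' f.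
Proof.
move=> le [L [hL hf]]; exists L; split=> //.
by apply: sub_all hL => t /= h; apply: leq_trans le.
Qed.

Lemma ppoly_cst D (g : vec -> R) : ppoly D (fun q _ => g q).
Proof.
exists [:: (g, [ffun=> 0%N])]; split.
  by rewrite /= andbT /mdeg big1 // => i _; rewrite ffunE.
move=> q p _; rewrite big_seq1 /monomial big1 ?mulr1 // => i _.
by rewrite ffunE expr0.
Qed.
Arguments ppoly_cst {D} g.

Lemma ppoly_coord j : ppoly 1 (fun _ p => p j).
Proof.
exists [:: (fun _ => 1, [ffun i => nat_of_bool (i == j)])]; split.
  rewrite /= andbT /mdeg (bigD1 j) //= big1 ?ffunE ?eqxx // => i /negbTE ij.
  by rewrite ffunE ij.
move=> q p _; rewrite big_seq1 mul1r /monomial (bigD1 j) //= ffunE eqxx expr1.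
by rewrite big1 ?mulr1 // => i /negbTE ij; rewrite ffunE ij expr0.
Qed.

Lemma ppolyD D f g : ppoly D f -> ppoly D g -> ppoly D (fun q p => f q p + g q p).
Proof.
move=> [L1 [h1 e1]] [L2 [h2 e2]]; exists (L1 ++ L2).
by split=> [|q p hq]; rewrite ?all_cat ?h1 ?h2 // big_cat /= e1 // e2.
Qed.

Lemma ppoly_sum_seq D (T : Type) (P : pred T) (s : seq T) (F : T -> vec -> vec -> R) :
  all P s -> (forall t, P t -> ppoly D (F t)) ->
  ppoly D (fun q p => \sum_(t <- s) F t q p).
Proof.
move=> + hF; elim: s => [_|t s IH /andP[Pt Ps]].
  by apply: ppoly_ext (ppoly_cst (fun _ => 0)) _ => q p _; rewrite big_nil.
apply: ppoly_ext (ppolyD (hF t Pt) (IH Ps)) _ => q p _.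
by rewrite big_cons.
Qed.

Lemma ppoly_sum D (I : finType) (F : I -> vec -> vec -> R) :
  (forall i, ppoly D (F i)) -> ppoly D (fun q p => \sum_i F i q p).
Proof. by move=> hF; apply: (ppoly_sum_seq (P := predT)) => //; apply: all_predT. Qed.

Lemma monomialD (m1 m2 : {ffun 'I_n -> nat}) p :
  monomial [ffun i => (m1 i + m2 i)%N] p = monomial m1 p * monomial m2 p.
Proof. by rewrite /monomial -big_split; apply: eq_bigr => i _; rewrite ffunE exprD. Qed.

Lemma mdegD (m1 m2 : {ffun 'I_n -> nat}) :
  mdeg [ffun i => (m1 i + m2 i)%N] = (mdeg m1 + mdeg m2)%N.
Proof. by rewrite /mdeg -big_split; apply: eq_bigr => i _; rewrite ffunE. Qed.

Lemma ppolyM a b f g :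
  ppoly a f -> ppoly b g -> ppoly (a + b) (fun q p => f q p * g q p).
Proof.
move=> [L1 [h1 e1]] [L2 [h2 e2]].
exists [seq (fun q => t1.1 q * t2.1 q, [ffun i => (t1.2 i + t2.2 i)%N])
         | t1 : term <- L1, t2 : term <- L2]; split.
  apply/allP => _ /allpairsPdep[t1 [t2 [/(allP h1) d1 /(allP h2) d2 ->]]].
  by rewrite /= mdegD leq_add.
move=> q p hq; rewrite e1 // e2 // big_allpairs_dep /= mulr_suml.
apply: eq_bigr => t1 _; rewrite mulr_sumr; apply: eq_bigr => t2 _.
by rewrite monomialD mulrACA.
Qed.

Lemma ppolyZ D (g : vec -> R) f : ppoly D f -> ppoly D (fun q p => g q * f q p).
Proof. exact: ppolyM (ppoly_cst (D := 0) g). Qed.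

Lemma ppolyX d m f : ppoly d f -> ppoly (m * d) (fun q p => f q p ^+ m).
Proof.
move=> hf; elim: m => [|m IH].
  by apply: ppoly_ext (ppoly_cst (fun _ => 1)) _ => q p _; rewrite expr0.
by rewrite mulSn; apply: ppoly_ext (ppolyM hf IH) _ => q p _; rewrite exprS.
Qed.

Lemma ppoly_prod (I : finType) (d : I -> nat) (F : I -> vec -> vec -> R) :
  (forall i, ppoly (d i) (F i)) ->
  ppoly (\sum_i d i)%N (fun q p => \prod_i F i q p).
Proof.
move=> hF; rewrite /index_enum; elim: (Finite.enum I) => [|i s IH].
  by rewrite big_nil; apply: ppoly_ext (ppoly_cst (fun _ => 1)) _ => q p _; rewrite big_nil.
by rewrite big_cons; apply: ppoly_ext (ppolyM (hF i) IH) _ => q p _; rewrite big_cons.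
Qed.

Lemma ppoly_comp D f (phi : vec -> vec) :
  (forall i, ppoly 1 (fun _ p => phi p i)) -> ppoly D f ->
  ppoly D (fun q p => f q (phi p)).
Proof.
move=> hphi [L [hL ef]].
have hterm t : (mdeg t.2 <= D)%N ->
    ppoly D (fun q p => t.1 q * monomial t.2 (phi p)).
  move=> ht; apply: ppolyZ; apply: ppoly_leq (ppoly_prod (fun i => ppolyX (t.2 i) (hphi i))).
  by under eq_bigr do rewrite muln1.
by apply: ppoly_ext (ppoly_sum_seq hL hterm) _ => q p hq; rewrite ef.
Qed.

End PolynomialsInP.

Arguments ppoly_cst {R n D} g.
Arguments ppoly_coord {R n} j.

Section Integration.
Variables (R : realType) (n : nat).
Local Notation vec := ('I_n -> R).
Local Notation term := ((vec -> R) * {ffun 'I_n -> nat})%type.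

Definition upd (p : vec) (b : 'I_n) (u : R) : vec := fun i => if i == b then u else p i.

Definition trunc (k : nat) (p : vec) : vec := fun i => if (i < k)%N then p i else 0.

Definition axis (a : 'I_n) (s : R) : vec := upd (fun _ => 0) a s.

Lemma upd_at p b u : upd p b u b = u.
Proof. by rewrite /upd eqxx. Qed.

Lemma upd_upd p b u v : upd (upd p b u) b v = upd p b v.
Proof. by apply/funext => i; rewrite /upd; case: eqP. Qed.

Lemma upd_id p b : upd p b (p b) = p.
Proof. by apply/funext => i; rewrite /upd; case: eqP => [->|]. Qed.

Lemma trunc_all p : trunc n p = p.
Proof. by apply/funext => i; rewrite /trunc ltn_ord. Qed.

Lemma trunc_upd k (b : 'I_n) p v :
  val b = k -> trunc k.+1 (upd p b v) = upd (trunc k p) b v.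
Proof.
move=> bk; apply/funext => i; rewrite /trunc /upd ltnS leq_eqVlt -val_eqE bk.
by case: ltngtP => //=; rewrite ltnn.
Qed.

Lemma monomial_upd m p a u :
  monomial m (upd p a u) = u ^+ m a * \prod_(i | i != a) p i ^+ m i.
Proof.
rewrite /monomial (bigD1 a) //= upd_at; congr (_ * _).
by apply: eq_bigr => i /negbTE ia; rewrite /upd ia.
Qed.

Definition primitive (a : 'I_n) (L : seq term) : seq term :=
  [seq (fun q => t.1 q / (t.2 a).+1%:R, [ffun i => (t.2 i + (i == a))%N]) | t : term <- L].

Lemma primitive_deg D a L :
  all (fun t => mdeg t.2 <= D)%N L -> all (fun t => mdeg t.2 <= D.+1)%N (primitive a L).
Proof.
rewrite all_map => hL; apply: sub_all hL => t /= ht.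
rewrite /mdeg (eq_bigr (fun i => t.2 i + (i == a))%N) => [|i _]; last by rewrite ffunE.
have one_a : (\sum_i (i == a) = 1)%N by rewrite (bigD1 a) //= eqxx big1 // => i /negbTE ->.
by rewrite big_split /= one_a addn1.
Qed.

Lemma primitive_upd0 a L q p :
  \sum_(t <- primitive a L) t.1 q * monomial t.2 (upd p a 0) = 0.
Proof.
rewrite big_map big1_seq // => t _.
by rewrite monomial_upd ffunE eqxx addn1 expr0n /= mul0r mulr0.
Qed.

Lemma is_derive_primitive a L q p (u : R) :
  is_derive u 1 (fun v => \sum_(t <- primitive a L) t.1 q * monomial t.2 (upd p a v))
    (\sum_(t <- L) t.1 q * monomial t.2 (upd p a u)).
Proof.
pose f (t : term) (v : R) :=
  t.1 q / (t.2 a).+1%:R * monomial [ffun i => (t.2 i + (i == a))%N] (upd p a v).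
have hs t : is_derive u 1 (f t) (t.1 q * monomial t.2 (upd p a u)).
  set r := \prod_(i | i != a) p i ^+ t.2 i.
  have hr : \prod_(i | i != a) p i ^+ [ffun i => (t.2 i + (i == a))%N] i = r.
    by apply: eq_bigr => i /negbTE ia; rewrite ffunE ia addn0.
  have hX := is_deriveZ (t.1 q / (t.2 a).+1%:R * r) (is_deriveX (t.2 a).+1 (is_derive_id u 1)).
  apply: is_derive_ext (is_derive_eq hX _) _ => [|v]; rewrite /GRing.scale /=.
    by rewrite monomial_upd -/r mulr1; field; rewrite nat1r pnatr_eq0.
  by rewrite /f monomial_upd hr ffunE eqxx addn1 exprfctE /GRing.scale /= mulrAC -mulrA.
by apply: is_derive_ext (is_derive_sum_seq L hs) _ => v; rewrite big_map.
Qed.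

Lemma ppoly_primitive D (a : 'I_n) (A F : vec -> vec -> R) :
  ppoly D A ->
  (forall q p : vec, distinct q -> is_derive (p a) 1 (fun v => F q (upd p a v)) (A q p)) ->
  ppoly D.+1 (fun q p => F q p - F q (upd p a 0)).
Proof.
move=> [L [hL eA]] dF; exists (primitive a L); split; first exact: primitive_deg.
move=> q p hq.
have hF (v : R) : is_derive v 1 (fun v => F q (upd p a v)) (A q (upd p a v)).
  by have := dF q (upd p a v) hq; rewrite upd_at; under eq_fun do rewrite upd_upd.
have hG (v : R) : is_derive v 1
    (fun v => \sum_(t <- primitive a L) t.1 q * monomial t.2 (upd p a v)) (A q (upd p a v)).
  by rewrite eA //; apply: is_derive_primitive.
have := is_derive_eq_sub_cst hF hG (p a) 0.
by rewrite upd_id primitive_upd0 subr0 => <-; rewrite opprB addrC subrK.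
Qed.

Lemma ppoly_of_partials D F (A : 'I_n -> vec -> vec -> R) :
  (forall b, ppoly D (A b)) ->
  (forall (q p : vec) b, distinct q -> is_derive (p b) 1 (fun v => F q (upd p b v)) (A b q p)) ->
  ppoly D.+1 F.
Proof.
move=> hA dF.
suff hk k : (k <= n)%N -> ppoly D.+1 (fun q p => F q (trunc k p)).
  by apply: ppoly_ext (hk n (leqnn n)) _ => q p _; rewrite trunc_all.
elim: k => [_|k IH lt_kn]; first exact: (ppoly_cst (fun q => F q (fun _ => 0))).
pose b := Ordinal lt_kn.
have trunc_b v p : trunc k.+1 (upd p b v) = upd (trunc k p) b v by apply: trunc_upd.
have trunc_b0 p : upd (trunc k p) b 0 = trunc k p.
  by rewrite -[RHS](upd_id _ b) /trunc /= ltnn.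
have hstep : ppoly D.+1 (fun q p => F q (trunc k.+1 p) - F q (trunc k.+1 (upd p b 0))).
  apply: (ppoly_primitive (A := fun q p => A b q (trunc k.+1 p))).
    apply: ppoly_comp (hA b) => i; rewrite /trunc.
    by case: ltnP => _; [apply: ppoly_coord | apply: ppoly_cst].
  move=> q p hq; rewrite -[in A b q _](upd_id p b) trunc_b.
  under eq_fun do rewrite trunc_b.
  by have := dF q (upd (trunc k p) b (p b)) b hq; rewrite upd_at; under eq_fun do rewrite upd_upd.
apply: ppoly_ext (ppolyD hstep (IH (ltnW lt_kn))) _ => q p _.
by rewrite trunc_b trunc_b0 subrK.
Qed.

End Integration.

Lemma poly_eq0_of_horner (R : numDomainType) (P : {poly R}) :
  (forall s, P.[s] = 0) -> P = 0.
Proof.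
move=> P0; apply: (@roots_geq_poly_eq0 _ _ [seq i%:R | i <- iota 0 (size P)]).
- by apply/allP => _ /mapP[i _ ->]; rewrite /root P0.
- by rewrite map_inj_uniq ?iota_uniq // => i j /eqP; rewrite eqr_nat => /eqP.
- by rewrite size_map size_iota.
Qed.

Section ExactDegree.
Variables (R : realType) (n D : nat).
Local Notation vec := ('I_n -> R).
Local Notation index := {ffun 'I_n -> 'I_D.+1}.

Definition index_deg (al : index) : nat := (\sum_i (al i : nat))%N.

Definition index_nat (al : index) : {ffun 'I_n -> nat} := [ffun i => (al i : nat)].

Lemma index_nat_inj : injective index_nat.
Proof.
move=> al be /ffunP e; apply/ffunP => i; apply: val_inj.
by have := e i; rewrite !ffunE.
Qed.

Lemma index_degE al : index_deg al = mdeg (index_nat al).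
Proof. by apply: eq_bigr => i _; rewrite ffunE. Qed.

Lemma ppoly_index_repr f : ppoly D f ->
  exists c : index -> vec -> R, forall q p, distinct q ->
    f q p = \sum_(al | (index_deg al <= D)%N) c al q * \prod_i p i ^+ al i.
Proof.
move=> [L [hL ef]].
exists (fun al q => \sum_(t <- L) (if t.2 == index_nat al then t.1 q else 0)).
move=> q p hq; under eq_bigr do rewrite mulr_suml.
rewrite exchange_big ef //=.
apply: eq_big_seq => t /(allP hL) /= ht.
pose al0 : index := [ffun i => inord (t.2 i)].
have al0E : index_nat al0 = t.2.
  apply/ffunP => i; rewrite !ffunE inordK // ltnS.
  by apply: leq_trans ht; rewrite /mdeg (bigD1 i) //= leq_addr.
rewrite (bigD1 al0) /=; last by rewrite index_degE al0E.
rewrite -al0E eqxx [X in _ + X]big1 ?addr0; last first.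
  move=> al /andP[_ ne]; case: eqP => [/index_nat_inj e|_]; last by rewrite mul0r.
  by rewrite e eqxx in ne.
by congr (_ * _); apply: eq_bigr => i _; rewrite ffunE.
Qed.

Definition supported_at (a : 'I_n) (al : index) := [forall i, (i != a) ==> ((al i : nat) == 0%N)].

Lemma prod_axis (al : index) a (s : R) :
  \prod_i axis a s i ^+ al i = (supported_at a al)%:R * s ^+ al a.
Proof.
rewrite (bigD1 a) //= [axis _ _ _]upd_at mulrC; congr (_ * _).
case: (boolP (supported_at a al)) => [/forallP sa | /forallPn[i]].
  apply: big1 => i ia; have /implyP/(_ ia)/eqP -> := sa i.
  by rewrite expr0.
rewrite negb_imply => /andP[ia ali]; rewrite (bigD1 i) //= /axis /upd (negbTE ia).
by rewrite expr0n (negbTE ali) mul0r.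
Qed.

Lemma index_degE_supported a al : supported_at a al -> index_deg al = al a.
Proof.
move=> /forallP sa; rewrite /index_deg (bigD1 a) //= big1 ?addn0 // => i ia.
by have /implyP/(_ ia)/eqP := sa i.
Qed.

Lemma exists_top_coef (c : index -> R) a (h0 k : R) :
  (0 < D)%N -> k != 0 ->
  (forall s, \sum_(al | (index_deg al <= D)%N) c al * \prod_i axis a s i ^+ al i
               = h0 + k * s ^+ D) ->
  exists2 al, index_deg al = D & c al != 0.
Proof.
move=> D0 k0 hax.
pose P : {poly R} :=
  \sum_(al | (index_deg al <= D)%N) (c al * (supported_at a al)%:R) *: 'X^(al a).
have PE : P = k *: 'X^D + h0%:P.
  apply/eqP; rewrite -subr_eq0; apply/eqP/poly_eq0_of_horner => s.
  rewrite hornerD hornerN hornerD hornerZ hornerXn hornerC horner_sum (addrC (k * _)) -hax.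
  apply/eqP; rewrite subr_eq0; apply/eqP/eq_bigr => al _.
  by rewrite hornerZ hornerXn prod_axis mulrA.
case: (pselect (exists2 al, index_deg al = D & c al != 0)) => // none.
move: k0; have := congr1 (fun Q : {poly R} => Q`_D) PE.
rewrite /= coefD coefZ coefXn eqxx mulr1 coefC gtn_eqF // addr0 coef_sum => <-.
rewrite big1 ?eqxx // => al _; rewrite coefZ coefXn.
case: (boolP (supported_at a al)) => [sa|_]; last by rewrite mulr0 mul0r.
case: (eqVneq D (al a)) => [aD|_]; last by rewrite mulr0.
suff -> : c al = 0 by rewrite !mul0r.
by apply/eqP/negPn/negP => cal; apply: none; exists al; rewrite // (index_degE_supported sa) -aD.
Qed.

End ExactDegree.

Section Peakon.
Variables (R : realType) (n : nat).
Local Notation vec := ('I_n -> R).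
Local Notation cV := 'cV[R]_(n + n).

Lemma split_lshift (i : 'I_n) : fintype.split (lshift n i) = inl i.
Proof. exact: (unsplitK (inl _ i)). Qed.

Lemma split_rshift (i : 'I_n) : fintype.split (rshift n i) = inr i.
Proof. exact: (unsplitK (inr _ i)). Qed.

Definition mkx (q p : vec) : cV := col_mx (\col_i q i) (\col_i p i).

Lemma qc_mkx q p : qc (mkx q p) = q.
Proof. by apply/funext => i; rewrite /qc col_mxEu mxE. Qed.

Lemma pc_mkx q p : pc (mkx q p) = p.
Proof. by apply/funext => i; rewrite /pc col_mxEd mxE. Qed.

Lemma mkxK (x : cV) : mkx (qc x) (pc x) = x.
Proof.
rewrite -[RHS]vsubmxK; congr col_mx; apply/matrixP => i j.
by rewrite [j]ord1 !mxE.
by rewrite [j]ord1 !mxE.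
Qed.

Lemma region_mkx q p : region (mkx q p) <-> distinct q.
Proof. by rewrite /region /= qc_mkx. Qed.

Definition isq (a : 'I_(n + n)) : bool := if fintype.split a is inl _ then true else false.

Lemma isq_lshift i : isq (lshift n i) = true.
Proof. by rewrite /isq split_lshift. Qed.

Lemma isq_rshift i : isq (rshift n i) = false.
Proof. by rewrite /isq split_rshift. Qed.

Lemma P0_ppoly a b : ppoly (2 - isq a - isq b) (fun q p => P0 (mkx q p) a b).
Proof.
case: (split_ordP a) => i ->; case: (split_ordP b) => j ->;
  rewrite ?isq_lshift ?isq_rshift /=.
- apply: ppoly_ext (ppoly_cst (fun q => if (i < j)%N then
      Num.sg (q i - q j) * (expR (- `|q i - q j|) - 1) else 0)) _ => q p _.
  by rewrite mxE !split_lshift qc_mkx.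
- by apply: ppoly_ext (ppoly_cst (fun _ => 0)) _ => q p _; rewrite mxE split_lshift split_rshift.
- apply: ppoly_ext (ppolyM (ppoly_coord i) (ppoly_cst (fun q => expR (- `|q i - q j|)))) _.
  by move=> q p _; rewrite mxE split_lshift split_rshift qc_mkx pc_mkx.
- apply: ppoly_ext (ppolyZ (fun q => if (i < j)%N then
      - (Num.sg (q i - q j) * expR (- `|q i - q j|)) else 0)
      (ppolyM (ppoly_coord i) (ppoly_coord j))) _ => q p _.
  by rewrite mxE !split_rshift qc_mkx pc_mkx; case: ltnP => _; rewrite ?mul0r //; ring.
Qed.

Lemma sharpP0_ppoly b a : ppoly (2 - isq a - isq b) (fun q p => sharp (P0 (mkx q p)) b a).
Proof.
have hba := ppolyZ (fun _ => -1) (P0_ppoly b a); rewrite subnAC in hba.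
apply: ppoly_ext (ppolyD (P0_ppoly a b) hba) _ => q p _.
by rewrite [RHS]mxE mulN1r.
Qed.

Lemma sharpP1E : sharp (P1 R n) = block_mx 0 1%:M (- 1%:M) 0.
Proof.
apply/matrixP => b a.
case: (split_ordP b) => i ->; case: (split_ordP a) => j ->;
  rewrite ?block_mxEul ?block_mxEur ?block_mxEdl ?block_mxEdr !mxE ?split_lshift ?split_rshift /=
    ?subrr ?subr0 ?sub0r // ?(eq_sym j); by case: eqP; rewrite ?oppr0.
Qed.

Lemma invmx_sharpP1 : invmx (sharp (P1 R n)) = block_mx 0 (- 1%:M) 1%:M 0.
Proof.
have J : block_mx 0 (- 1%:M) 1%:M 0 *m sharp (P1 R n) = 1%:M.
  rewrite sharpP1E mulmx_block !mulmx0 !mul0mx !add0r !addr0 mulmxN mulNmx !mul1mx.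
  by rewrite opprK -scalar_mx_block.
have [_ uS] := mulmx1_unit J.
by rewrite -[invmx _]mul1mx -J -mulmxA mulmxV // mulmx1.
Qed.

Lemma recS_lshift (x al : cV) j :
  recS x al (lshift n j) 0 = - \sum_a sharp (P0 x) (rshift n j) a * al a 0.
Proof.
rewrite /recS invmx_sharpP1 -[sharp _ *m al]vsubmxK mul_block_col !mul0mx mulNmx.
by rewrite !mul1mx add0r addr0 col_mxEu !mxE.
Qed.

Lemma recS_rshift (x al : cV) j :
  recS x al (rshift n j) 0 = \sum_a sharp (P0 x) (lshift n j) a * al a 0.
Proof.
rewrite /recS invmx_sharpP1 -[sharp _ *m al]vsubmxK mul_block_col !mul0mx mulNmx.
by rewrite !mul1mx add0r addr0 col_mxEd !mxE.
Qed.

Definition vshift (v : vec) (k : 'I_n) (t : R) : vec := fun i => v i + t * (i == k)%:R.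

Lemma mkx_shift_q q p k t : mkx q p + t *: ecoord R (lshift n k) = mkx (vshift q k t) p.
Proof.
apply/matrixP => a j; rewrite [j]ord1.
by case: (split_ordP a) => i ->; rewrite !mxE ?split_lshift ?split_rshift !mxE /=
  ?eq_lshift ?eq_rlshift andbT ?mulr0 ?addr0.
Qed.

Lemma mkx_shift_p q p k t : mkx q p + t *: ecoord R (rshift n k) = mkx q (vshift p k t).
Proof.
apply/matrixP => a j; rewrite [j]ord1.
by case: (split_ordP a) => i ->; rewrite !mxE ?split_lshift ?split_rshift !mxE /=
  ?eq_rshift ?eq_lrshift andbT ?mulr0 ?addr0.
Qed.

Lemma H1_mkx q p : H1 (mkx q p) = 2^-1 * \sum_i \sum_j p i * p j * expR (- `|q i - q j|).
Proof. by rewrite /H1 qc_mkx pc_mkx. Qed.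

Lemma derivable_kernel_shift q k i j : distinct q ->
  derivable (fun t => expR (- `|vshift q k t i - vshift q k t j|)) 0 1.
Proof.
move=> hq; have [<-|ij] := eqVneq i j.
  have -> : (fun t => expR (- `|vshift q k t i - vshift q k t i|)) = cst 1.
    by apply/funext => t; rewrite subrr normr0 oppr0 expR0.
  exact: derivable_cst.
pose g t := `|(q i - q j) + t * ((i == k)%:R - (j == k)%:R)|.
have -> : (fun t => expR (- `|vshift q k t i - vshift q k t j|)) = expR \o -%R \o g.
  by apply/funext => t; rewrite /g /vshift /=; congr (expR (- `|_|)); ring.
have /derivableP dg : derivable g 0 1 by apply: derivable_norm_affine; rewrite subr_eq0 hq.
by have [] := is_derive1_comp (is_derive_expR _) (is_deriveN dg).
Qed.

Lemma dformH1_lshift q p k : distinct q ->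
  dform (@H1 R n) (mkx q p) (lshift n k) 0 =
  2^-1 * \sum_i \sum_j p i * p j * 'D_1 (fun t => expR (- `|vshift q k t i - vshift q k t j|)) 0.
Proof.
move=> hq; rewrite /dform mxE derive1E; under eq_fun do rewrite mkx_shift_q H1_mkx.
have h := is_derive_quadform (u := fun i _ => p i)
  (w := fun i j t => expR (- `|vshift q k t i - vshift q k t j|))
  (fun i => is_derive_cst (p i) (0 : R) 1)
  (fun i j => derivableP (derivable_kernel_shift (k := k) (i := i) (j := j) hq)).
rewrite derive_val.
by congr (_ * _); apply: eq_bigr => i _; apply: eq_bigr => j _; rewrite !mulr0 addr0 mulr0 addr0.
Qed.

Lemma dformH1_rshift q p k :
  dform (@H1 R n) (mkx q p) (rshift n k) 0 = \sum_i p i * expR (- `|q i - q k|).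
Proof.
rewrite /dform mxE derive1E; under eq_fun do rewrite mkx_shift_p H1_mkx.
have h := is_derive_quadform (u := fun i t => vshift p k t i)
  (w := fun i j _ => expR (- `|q i - q j|))
  (fun i => is_derive_affine (p i) _ 0) (fun i j => is_derive_cst _ (0 : R) 1).
rewrite derive_val.
set E := fun i j => expR (- `|q i - q j|).
have sum_row : \sum_i \sum_j E i j * (p i * (j == k)%:R) = \sum_i p i * E i k.
  apply: eq_bigr => i _; rewrite (bigD1 k) //= eqxx mulr1 big1 ?addr0 1?mulrC //.
  by move=> j /negbTE ->; rewrite !mulr0.
have sum_col : \sum_i \sum_j E i j * (p j * (i == k)%:R) = \sum_i p i * E i k.
  rewrite exchange_big; apply: eq_bigr => j _; rewrite (bigD1 k) //= eqxx mulr1 big1 ?addr0.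
    by rewrite /E distrC mulrC.
  by move=> i /negbTE ->; rewrite !mulr0.
under eq_bigr do under eq_bigr do rewrite /vshift !mul0r !addr0 mulr0 add0r mulrDr.
under eq_bigr do rewrite big_split; rewrite big_split /= sum_row sum_col.
by field.
Qed.

Lemma dformH1_ppoly c : ppoly (1 + isq c) (fun q p => dform (@H1 R n) (mkx q p) c 0).
Proof.
case: (split_ordP c) => k ->; rewrite ?isq_lshift ?isq_rshift.
- apply: ppoly_ext (ppolyZ (fun _ => 2^-1) (ppoly_sum (fun i => ppoly_sum (fun j =>
    ppolyM (ppolyM (ppoly_coord i) (ppoly_coord j))
      (ppoly_cst (fun q => 'D_1 (fun t => expR (- `|vshift q k t i - vshift q k t j|)) 0)))))) _.
  by move=> q p hq; rewrite dformH1_lshift.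
- apply: ppoly_ext (ppoly_sum (fun i =>
    ppolyM (ppoly_coord i) (ppoly_cst (fun q => expR (- `|q i - q k|))))) _.
  by move=> q p _; rewrite dformH1_rshift.
Qed.

Definition hier_form (k : nat) (x : cV) : cV := iter k (recS x) (dform (@H1 R n) x).

Lemma hier_form_ppoly k c : ppoly (k.+1 + isq c) (fun q p => hier_form k (mkx q p) c 0).
Proof.
elim: k c => [|k IH] c; first exact: dformH1_ppoly.
case: (split_ordP c) => j ->; rewrite ?isq_lshift ?isq_rshift.
- have deg a : (2 - isq a - isq (rshift n j) + (k.+1 + isq a) <= k.+2 + true)%N.
    by rewrite isq_rshift; case: (isq a) => /=; lia.
  apply: ppoly_ext (ppolyZ (fun _ => -1) (ppoly_sum (fun a =>
    ppoly_leq (deg a) (ppolyM (sharpP0_ppoly (rshift n j) a) (IH a))))) _.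
  by move=> q p _; rewrite /hier_form iterS recS_lshift mulN1r.
- have deg a : (2 - isq a - isq (lshift n j) + (k.+1 + isq a) <= k.+2 + false)%N.
    by rewrite isq_lshift; case: (isq a) => /=; lia.
  apply: ppoly_ext (ppoly_sum (fun a =>
    ppoly_leq (deg a) (ppolyM (sharpP0_ppoly (lshift n j) a) (IH a)))) _.
  by move=> q p _; rewrite /hier_form iterS recS_rshift.
Qed.

Lemma sum_axisM a s (F : 'I_n -> R) : \sum_i axis a s i * F i = s * F a.
Proof.
rewrite (bigD1 a) //= [axis _ _ _]upd_at big1 ?addr0 // => i ia.
by rewrite /axis /upd (negbTE ia) mul0r.
Qed.

Lemma P0_axis_pp q a s i j : P0 (mkx q (axis a s)) (rshift n i) (rshift n j) = 0.
Proof.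
rewrite mxE !split_rshift pc_mkx; case: ltnP => // ij.
rewrite -(mulrA (Num.sg _)).
have -> : axis a s i * axis a s j = 0.
  rewrite /axis /upd; case: ifP => [/eqP ia|_]; last by rewrite mul0r.
  case: ifP => [/eqP ja|_]; last by rewrite mulr0.
  by move: ij; rewrite ia ja ltnn.
by rewrite mulr0 mul0r oppr0.
Qed.

Lemma dformH1_axis q a s : distinct q ->
  (forall j, dform (@H1 R n) (mkx q (axis a s)) (lshift n j) 0 = 0) /\
  dform (@H1 R n) (mkx q (axis a s)) (rshift n a) 0 = s.
Proof.
move=> hq; split=> [j|]; last by rewrite dformH1_rshift sum_axisM subrr normr0 oppr0 expR0 mulr1.
rewrite dformH1_lshift //; under eq_bigr do under eq_bigr do rewrite -mulrA.
under eq_bigr do rewrite -mulr_sumr sum_axisM.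
rewrite sum_axisM.
have -> : (fun t => expR (- `|vshift q j t a - vshift q j t a|)) = cst 1.
  by apply/funext => t; rewrite subrr normr0 oppr0 expR0.
by rewrite derive_cst !mulr0.
Qed.

Lemma hier_form_axis k q a s : distinct q ->
  (forall j, hier_form k (mkx q (axis a s)) (lshift n j) 0 = 0) /\
  hier_form k (mkx q (axis a s)) (rshift n a) 0 = s ^+ k.+1.
Proof.
move=> hq; elim: k => [|k [IHq IHp]]; first by rewrite expr1; apply: dformH1_axis.
rewrite /hier_form !iterS -/(hier_form k _); split=> [j|].
  rewrite recS_lshift big_split_ord /= big1 => [|i _]; last by rewrite IHq mulr0.
  by rewrite add0r big1 ?oppr0 // => i _; rewrite mxE !P0_axis_pp subrr mul0r.
rewrite recS_rshift big_split_ord /= big1 ?add0r => [|i _]; last by rewrite IHq mulr0.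
under eq_bigr do rewrite mxE [P0 _ (rshift _ _) _]mxE [P0 _ (lshift _ _) _]mxE
  split_lshift split_rshift qc_mkx pc_mkx subr0 -mulrA.
by rewrite sum_axisM IHp subrr normr0 oppr0 expR0 mul1r -exprS.
Qed.

Lemma is_derive_p_coord (F A : cV -> R) (q p : vec) b :
  (forall x, region x -> is_derive (0 : R) 1 (fun t => F (x + t *: ecoord R (rshift n b))) (A x)) ->
  distinct q -> is_derive (p b) 1 (fun v => F (mkx q (upd p b v))) (A (mkx q p)).
Proof.
move=> dF hq; apply: is_derive_translate.
have -> : (fun t => F (mkx q (upd p b (p b + t)))) =
          (fun t => F (mkx q p + t *: ecoord R (rshift n b))).
  apply/funext => t; rewrite mkx_shift_p; congr (F (mkx q _)); apply/funext => i.
  by rewrite /upd /vshift; case: ifP => [/eqP ->|_]; rewrite ?mulr1 ?mulr0 ?addr0.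
exact/dF/region_mkx.
Qed.

Lemma Ham_ppoly i (H : cV -> R) : is_Ham i H -> ppoly i.+1 (fun q p => H (mkx q p)).
Proof.
case: i => [|[|k]] /= hH.
- by rewrite hH; apply: ppoly_ext (ppoly_sum ppoly_coord) _ => q p _; rewrite /H0 pc_mkx.
- rewrite hH; apply: ppoly_ext (ppolyZ (fun _ => 2^-1) (ppoly_sum (fun i => ppoly_sum (fun j =>
    ppolyM (ppolyM (ppoly_coord i) (ppoly_coord j))
      (ppoly_cst (fun q => expR (- `|q i - q j|))))))) _.
  by move=> q p _; rewrite H1_mkx.
- apply: (ppoly_of_partials (A := fun b q p => hier_form k.+1 (mkx q p) (rshift n b) 0)).
    by move=> b; have := hier_form_ppoly k.+1 (rshift n b); rewrite isq_rshift addn0.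
  by move=> q p b hq; apply: is_derive_p_coord (fun x hx => hH x hx (rshift n b)) hq.
Qed.

Lemma Ham_axis i (H : cV -> R) q a : is_Ham i H -> distinct q ->
  exists h0, forall s, H (mkx q (axis a s)) = h0 + i.+1%:R^-1 * s ^+ i.+1.
Proof.
case: i => [|[|k]] /= hH hq.
- exists 0 => s; rewrite hH /H0 pc_mkx add0r invr1 mul1r expr1.
  by rewrite -[RHS]mulr1 -(sum_axisM a s (fun _ => 1)); under [RHS]eq_bigr do rewrite mulr1.
- exists 0 => s; rewrite hH H1_mkx add0r; under eq_bigr do under eq_bigr do rewrite -mulrA.
  under eq_bigr do rewrite -mulr_sumr sum_axisM.
  by rewrite sum_axisM subrr normr0 oppr0 expR0 mulr1 -expr2.
pose g u := H (mkx q (axis a u)).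
have dg (u : R) : is_derive u 1 g (u ^+ k.+2).
  have := is_derive_p_coord (b := a) (axis a u) (fun x hx => hH x hx (rshift n a)) hq.
  rewrite [axis a u a]upd_at (proj2 (hier_form_axis k.+1 a u hq)).
  by under eq_fun do rewrite upd_upd.
have dG (u : R) : is_derive u 1 (fun u => k.+3%:R^-1 * u ^+ k.+3) (u ^+ k.+2).
  have hX := is_deriveZ k.+3%:R^-1 (is_deriveX k.+3 (is_derive_id u 1)).
  apply: is_derive_ext (is_derive_eq hX _) _ => [|v]; rewrite /GRing.scale /=.
    by rewrite mulr1 mulrA mulVf ?pnatr_eq0 // mul1r.
  by rewrite exprfctE.
exists (g 0) => s; have := is_derive_eq_sub_cst dg dG s 0.
by rewrite expr0n mulr0 subr0 => <-; rewrite subrK.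
Qed.

Lemma poly_in_p_deg_of_axis D (H : cV -> R) q a h0 k :
  (0 < D)%N -> k != 0 -> ppoly D (fun q p => H (mkx q p)) -> distinct q ->
  (forall s, H (mkx q (axis a s)) = h0 + k * s ^+ D) -> poly_in_p_deg D H.
Proof.
move=> D0 k0 /ppoly_index_repr[c hc] hq hax.
have [al alD cal] : exists2 al, index_deg al = D & c al q != 0.
  by apply: (exists_top_coef (h0 := h0) D0 k0) => s; rewrite -hax hc.
exists c; split; first by move=> x hx; rewrite -[in LHS](mkxK x) hc.
exists al; split=> //; exists (mkx q (fun _ => 0)).
by rewrite qc_mkx; split=> //; apply/region_mkx.
Qed.

End Peakon.

Theorem corollary1 (R : realType) (n : nat) (hn : (1 <= n)%N)
  (i : nat) (H : 'cV[R]_(n + n) -> R) :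
  is_Ham i H -> poly_in_p_deg i.+1 H.
Proof.
move=> hH.
have hq : distinct (fun j : 'I_n => (j : nat)%:R : R) by move=> j l; rewrite eqr_nat.
have [h0 hax] := Ham_axis (Ordinal hn) hH hq.
apply: poly_in_p_deg_of_axis (Ham_ppoly hH) hq hax; by rewrite ?invr_eq0 ?pnatr_eq0.
Qed.
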